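(* Let $v_0\in\mathbb{R}^n$ be a unit vector, $\tau>0$, $\epsilon\ge 0$, and let $\mathbf{A}(x)$ be a homogeneous cubic polynomial such that $|\tilde{\mathbb{E}}\,\mathbf{A}(x)|\le \epsilon\tau(\tilde{\mathbb{E}}\|x\|^4)^{3/4}$ for every degree-$4$ pseudo-expectation $\tilde{\mathbb{E}}$. Let $\mathbf{T}(x)=\tau\langle v_0,x\rangle^3+\mathbf{A}(x)$, and let $\tilde{\mathbb{E}}$ be any degree-$4$ pseudo-expectation satisfying $\{\|x\|^2=1\}$ that maximizes $\tilde{\mathbb{E}}\,\mathbf{T}(x)$ among all degree-$4$ pseudo-expectations satisfying $\{\|x\|^2=1\}$. Then $v:=\tilde{\mathbb{E}}x/\|\tilde{\mathbb{E}}x\|$ (where $\tilde{\mathbb{E}}x\in\mathbb{R}^n$ has coordinates $\tilde{\mathbb{E}}x_i$) satisfies $\langle v,v_0\rangle\ge 1-O(\epsilon)$.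
   Context: A degree-$d$ pseudo-expectation ($d$ even) is a linear functional $\tilde{\mathbb{E}}:\mathbb{R}[x]_{\le d}\to\mathbb{R}$ with $\tilde{\mathbb{E}}\,1=1$ and $\tilde{\mathbb{E}}\,p(x)^2\ge 0$ for every polynomial $p$ of degree at most $d/2$. It satisfies $\{p(x)=0\}$ if $\tilde{\mathbb{E}}\,p(x)q(x)=0$ for all $q$ with $\deg(pq)\le d$. *)

From HB Require Import structures.
From mathcomp Require Import all_boot all_order all_algebra.
Set Implicit Arguments. Unset Strict Implicit. Unset Printing Implicit Defensive.
Import Order.TTheory GRing.Theory Num.Theory.
Local Open Scope ring_scope.

(* exponent vectors with all exponents <= 4 (covers every monomial of degree <= 4) *)
Notation mon n := {ffun 'I_n -> 'I_5}.
Definition mdeg (n : nat) (m : mon n) : nat := (\sum_(i < n) (m i : nat))%N.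
Definition mon0 (n : nat) : mon n := [ffun _ => ord0].
Definition mon_var (n : nat) (i : 'I_n) : mon n :=
  [ffun j => if j == i then inord 1 else ord0].

Notation mpoly n R := {ffun mon n -> R}.

Section Polys.
Variables (n : nat) (R : numDomainType).

Definition pC (c : R) : mpoly n R := [ffun m => if m == mon0 n then c else 0].
Definition pX (i : 'I_n) : mpoly n R := [ffun m => if m == mon_var i then 1 else 0].
(* product (exact whenever the total degree is <= 4) *)
Definition pmul (p q : mpoly n R) : mpoly n R :=
  [ffun m : mon n => \sum_(m1 : mon n) \sum_(m2 : mon n)
     (if [forall i, (m1 i + m2 i)%N == m i] then p m1 * q m2 else 0)].
(* degree of a polynomial (0 for the zero polynomial) *)
Definition pdeg (p : mpoly n R) : nat := \max_(m | p m != 0%R) mdeg m.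
Definition homog3 (p : mpoly n R) : Prop := forall m, p m != 0%R -> mdeg m = 3%N.

(* a linear functional on R[x]_{<=4}, given by its values on monomials *)
Definition pE (L : mon n -> R) (p : mpoly n R) : R :=
  \sum_(m | (mdeg m <= 4)%N) p m * L m.
Definition is_pE4 (L : mon n -> R) : Prop :=
  pE L (pC 1) = 1 /\ forall p, (pdeg p <= 2)%N -> 0 <= pE L (pmul p p).
Definition satisfies4 (L : mon n -> R) (p : mpoly n R) : Prop :=
  forall q, (pdeg p + pdeg q <= 4)%N -> pE L (pmul p q) = 0.

Definition psqnorm : mpoly n R := \sum_(i < n) pmul (pX i) (pX i).
Definition plin (v : 'I_n -> R) : mpoly n R := [ffun m : mon n => \sum_(i < n) v i * pX i m].
Definition pscale (c : R) (p : mpoly n R) : mpoly n R := [ffun m : mon n => c * p m].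
Definition pcube (p : mpoly n R) : mpoly n R := pmul p (pmul p p).
Definition dotv (u v : 'I_n -> R) : R := \sum_(i < n) u i * v i.
Definition pEx (L : mon n -> R) : 'I_n -> R := fun i => pE L (pX i).
End Polys.

(* The point mass at v0 is a degree-4 pseudo-expectation on the sphere with objective
   at least tau - eps tau, while any feasible one has objective at most
   tau E~<v0,x>^3 + eps tau; so an optimal E~ has E~<v0,x>^3 >= 1 - 2 eps.
   The polynomial 2 - 8t^3 + 6t, with t = <v0,x>, is a sum of squares modulo
   |x|^2 = 1, hence E~<v0,x> >= 1 - 8 eps / 3.  Pseudo-expectation Cauchy-Schwarz
   gives |E~ x| <= 1, so normalising E~ x can only increase a nonnegative
   correlation with v0; a negative one forces eps > 3/8, where the bound is trivial. *)

From HB Require Import structures.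
From mathcomp Require Import all_boot all_order all_algebra.
From mathcomp Require Import ring lra.
Set Implicit Arguments. Unset Strict Implicit. Unset Printing Implicit Defensive.
Import Order.TTheory GRing.Theory Num.Theory.
Local Open Scope ring_scope.

(* 2 - 8y^3 + 6y = 2(1 - y)(1 + 2y)^2, and for |c| = 1, y = <c, x> we have
   2(1 - y) = (1 - y)^2 - (|x|^2 - 1) + |x - y c|^2. *)
Lemma cubic_sos_identity (S : comNzRingType) (I : finType) (x c : I -> S) (y w : S) :
  \sum_i c i * c i = 1 -> y = \sum_i c i * x i -> w = 1 + y *+ 2 ->
  1 *+ 2 - (y * (y * y)) *+ 8 + y *+ 6 =
    ((1 - y) * w) * ((1 - y) * w) - (\sum_i x i * x i - 1) * (w * w)
    + \sum_i ((x i - y * c i) * w) * ((x i - y * c i) * w).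
Proof.
move=> c_unit y_def w_def.
have lagrange : \sum_i (x i - y * c i) * (x i - y * c i) = \sum_i x i * x i - y * y.
  rewrite (eq_bigr (fun i => x i * x i - (y * (c i * x i)) *+ 2 + y * y * (c i * c i))) => [|i _];
    last by ring.
  by rewrite big_split sumrB /= sumrMnl -!mulr_sumr -y_def c_unit; ring.
rewrite [X in _ = _ + X](eq_bigr (fun i => (x i - y * c i) * (x i - y * c i) * (w * w))) => [|i _];
  last by ring.
by rewrite -mulr_suml lagrange w_def; ring.
Qed.

Section DotProduct.
Context {n : nat} {R : realFieldType}.
Implicit Types u v : 'I_n -> R.

Lemma dotv_divl u v r : dotv (fun i => u i / r) v = dotv u v / r.
Proof. by rewrite /dotv mulr_suml; apply: eq_bigr => i _; rewrite mulrAC. Qed.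

Lemma dotv_sqr_le u v : dotv v v = 1 -> dotv u v ^+ 2 <= dotv u u.
Proof.
move=> v_unit; set a := dotv u v.
have : 0 <= \sum_i (u i - a * v i) ^+ 2 by apply: sumr_ge0 => i _; apply: sqr_ge0.
rewrite (eq_bigr (fun i => u i * u i - (a * (u i * v i)) *+ 2 + a * a * (v i * v i))) => [|i _];
  last by ring.
rewrite big_split sumrB /= sumrMnl -!mulr_sumr -/(dotv u u) -/(dotv u v) -/a -/(dotv v v) v_unit.
rewrite expr2; lra.
Qed.

End DotProduct.

Section Normalization.
Context {R : rcfType}.
Implicit Types a N : R.

Lemma ler_div_sqrt a N : 0 <= a -> a ^+ 2 <= N -> N <= 1 -> a <= a / Num.sqrt N.
Proof.
move=> a_ge0 aN N_le1; have [->|a_neq0] := eqVneq a 0; first by rewrite mul0r.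
have a_gt0 : 0 < a by rewrite lt_def a_neq0.
have r_gt0 : 0 < Num.sqrt N by rewrite sqrtr_gt0 (lt_le_trans _ aN) ?exprn_gt0.
by rewrite ler_pdivlMr // ler_piMr // -sqrtr1 ler_sqrt.
Qed.

Lemma ger_div_sqrt a N : a ^+ 2 <= N -> -1 <= a / Num.sqrt N.
Proof.
move=> aN; have [r_gt0|r_le0] := ltP 0 (Num.sqrt N); last first.
  have r0 : Num.sqrt N = 0 by apply/le_anti; rewrite r_le0 sqrtr_ge0.
  by rewrite r0 invr0 mulr0 lerN10.
have : `|a| <= Num.sqrt N by rewrite -sqrtr_sqr ler_sqrt // (le_trans (sqr_ge0 a)).
by rewrite ler_pdivlMr // mulN1r ler_norml => /andP[].
Qed.

End Normalization.

Section MonomialAddition.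
Context {n : nat}.
Implicit Types m : mon n.

Definition is_madd m1 m2 m := [forall i, (m1 i + m2 i)%N == m i].
Definition mfits m1 m2 := [forall i, (m1 i + m2 i < 5)%N].
Definition madd m1 m2 : mon n := [ffun i => inord (m1 i + m2 i)].
Definition is_madd3 m1 m2 m3 m := [forall i, (m1 i + m2 i + m3 i)%N == m i].

Lemma is_maddE m1 m2 m : is_madd m1 m2 m = mfits m1 m2 && (m == madd m1 m2).
Proof.
apply/forallP/andP => [Hm | [/forallP fit /eqP-> i]]; last by rewrite ffunE /= inordK.
have fit i : (m1 i + m2 i < 5)%N by rewrite (eqP (Hm i)).
split; first exact/forallP.
by apply/eqP/ffunP => i; apply/val_inj; rewrite ffunE /= inordK // (eqP (Hm i)).
Qed.

Lemma is_maddC m1 m2 m : is_madd m1 m2 m = is_madd m2 m1 m.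
Proof. by apply: eq_forallb => i; rewrite addnC. Qed.

Lemma is_madd0l m2 m : is_madd (mon0 n) m2 m = (m == m2).
Proof.
have fit : mfits (mon0 n) m2 by apply/forallP => i; rewrite ffunE /= add0n ltn_ord.
have madd0 : madd (mon0 n) m2 = m2 by apply/ffunP => i; rewrite !ffunE /= inord_val.
by rewrite is_maddE fit madd0.
Qed.

Lemma is_madd3E m1 m2 m3 m :
  mfits m1 m2 && is_madd (madd m1 m2) m3 m = is_madd3 m1 m2 m3 m.
Proof.
apply/andP/forallP => [[/forallP fit /forallP Hm] i | Hm].
  by move: (Hm i); rewrite ffunE inordK.
have fit : mfits m1 m2.
  by apply/forallP => i; apply: leq_ltn_trans (ltn_ord (m i)); rewrite -(eqP (Hm i)) leq_addr.
by split=> //; apply/forallP => i; rewrite ffunE inordK ?(forallP fit).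
Qed.

Lemma is_madd3_rot m1 m2 m3 m : is_madd3 m1 m2 m3 m = is_madd3 m2 m3 m1 m.
Proof. by apply: eq_forallb => i; rewrite -addnA addnC. Qed.

Lemma mon_le_mdeg m i : (m i <= mdeg m)%N.
Proof. by rewrite /mdeg (bigD1 i) //= leq_addr. Qed.

Lemma mdeg_madd m1 m2 m : is_madd m1 m2 m -> mdeg m = (mdeg m1 + mdeg m2)%N.
Proof. by move=> /forallP Hm; rewrite /mdeg -big_split; apply: eq_bigr => i _; exact/esym/eqP. Qed.

Lemma mfits_mdeg m1 m2 : (mdeg m1 + mdeg m2 <= 4)%N -> mfits m1 m2.
Proof. by move=> Hd; apply/forallP => i; rewrite ltnS (leq_trans _ Hd) // leq_add ?mon_le_mdeg. Qed.

Lemma mdeg_mon0 : mdeg (mon0 n) = 0%N.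
Proof. by rewrite /mdeg big1 // => i _; rewrite ffunE. Qed.

Lemma mdeg_mon_var (i : 'I_n) : mdeg (mon_var i) = 1%N.
Proof.
rewrite /mdeg (bigD1 i) //= big1 => [|j /negbTE Hj]; last by rewrite ffunE Hj.
by rewrite ffunE eqxx inordK.
Qed.

End MonomialAddition.

(* [{ffun mon n -> R}] already carries the pointwise product; the alias [tpoly n R]
   carries [pmul] instead, i.e. the ring R[x]/(x_i^5), which is exact in degree <= 4. *)
Definition tpoly (n : nat) (R : numDomainType) := mpoly n R.

Section TruncatedPolynomialRing.
Context {n : nat} {R : numDomainType}.
Implicit Types (p q r : mpoly n R) (m : mon n).

Lemma pmulE p q m :
  pmul p q m = \sum_m1 \sum_(m2 | is_madd m1 m2 m) p m1 * q m2.
Proof. by rewrite ffunE; apply: eq_bigr => m1 _; rewrite [RHS]big_mkcond. Qed.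

Lemma sum_is_madd (F : mon n -> R) m1 m2 :
  \sum_(a | is_madd m1 m2 a) F a = if mfits m1 m2 then F (madd m1 m2) else 0.
Proof.
under eq_bigl => a do rewrite is_maddE.
by case: (mfits m1 m2); rewrite /= ?big_pred1_eq ?big_pred0.
Qed.

Lemma pmul3E p q r m :
  pmul (pmul p q) r m =
  \sum_m1 \sum_m2 \sum_m3 (if is_madd3 m1 m2 m3 m then p m1 * q m2 * r m3 else 0).
Proof.
transitivity (\sum_a \sum_m3 \sum_m1 \sum_m2
    (if is_madd m1 m2 a && is_madd a m3 m then p m1 * q m2 * r m3 else 0)).
  rewrite pmulE; apply: eq_bigr => a _; rewrite [LHS]big_mkcond; apply: eq_bigr => m3 _.
  rewrite pmulE mulr_suml; case: ifP => Ha; last first.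
    by rewrite big1 // => m1 _; rewrite big1 // => m2 _; rewrite andbF.
  apply: eq_bigr => m1 _; rewrite mulr_suml [LHS]big_mkcond; apply: eq_bigr => m2 _.
  by rewrite andbT; case: ifP; rewrite ?mul0r.
rewrite exchange_big /=.
under eq_bigr => m3 _.
  rewrite exchange_big /=; under eq_bigr do rewrite exchange_big /=.
  over.
rewrite exchange_big /=; apply: eq_bigr => m1 _.
rewrite exchange_big /=; apply: eq_bigr => m2 _; apply: eq_bigr => m3 _.
rewrite -big_mkcond big_mkcondr sum_is_madd -is_madd3E.
by case: (mfits m1 m2).
Qed.

Lemma pmulC : commutative (@pmul n R).
Proof.
move=> p q; apply/ffunP => m; rewrite !pmulE (exchange_big_dep xpredT) //.
by apply: eq_bigr => m2 _; apply: eq_big => [m1|m1 _]; [rewrite is_maddC | rewrite mulrC].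
Qed.

Lemma pmulA : associative (@pmul n R).
Proof.
move=> p q r; apply/ffunP => m; rewrite (pmulC p) !pmul3E; apply/esym.
under eq_bigr do under eq_bigr do under eq_bigr do rewrite is_madd3_rot.
rewrite [LHS]exchange_big; apply: eq_bigr => m2 _.
rewrite [LHS]exchange_big; apply: eq_bigr => m3 _; apply: eq_bigr => m1 _.
by case: ifP; rewrite // -mulrA mulrC.
Qed.

Lemma pmulCl c p : pmul (pC n c) p = pscale c p.
Proof.
apply/ffunP => m; rewrite pmulE (bigD1 (mon0 n)) //= [X in _ + X]big1 ?addr0.
  under eq_bigl => m2 do rewrite is_madd0l eq_sym.
  by rewrite big_pred1_eq !ffunE eqxx.
by move=> m1 /negbTE m1_neq0; apply: big1 => m2 _; rewrite ffunE m1_neq0 mul0r.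
Qed.

Lemma pmul1 : left_id (pC n 1) (@pmul n R).
Proof. by move=> p; rewrite pmulCl; apply/ffunP => m; rewrite ffunE mul1r. Qed.

Lemma pmulDl : left_distributive (@pmul n R) +%R.
Proof.
move=> p q r; apply/ffunP => m; rewrite [RHS]ffunE !pmulE -big_split /=.
apply: eq_bigr => m1 _; rewrite -big_split /=.
by apply: eq_bigr => m2 _; rewrite ffunE mulrDl.
Qed.

Lemma pC1_neq0 : pC n (1 : R) != 0.
Proof. by apply/eqP => /ffunP/(_ (mon0 n)); rewrite !ffunE eqxx; apply/eqP; rewrite oner_eq0. Qed.

HB.instance Definition _ := GRing.Zmodule.on (tpoly n R).
HB.instance Definition _ :=
  GRing.Zmodule_isComNzRing.Build (tpoly n R) pmulA pmulC pmul1 pmulDl pC1_neq0.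

Lemma tpoly_mulE (p q : tpoly n R) : p * q = pmul p q. Proof. by []. Qed.

Lemma psqnormE : psqnorm n R = \sum_i (pX R i : tpoly n R) * pX R i.
Proof. by []. Qed.

Lemma pC_is_zmod_morphism : zmod_morphism (@pC n R : R -> tpoly n R).
Proof. by move=> a b; apply/ffunP => m; rewrite !ffunE; case: ifP; rewrite ?subr0. Qed.

HB.instance Definition _ :=
  GRing.isZmodMorphism.Build R (tpoly n R) (@pC n R) pC_is_zmod_morphism.

Lemma pCM a b : (pC n a : tpoly n R) * pC n b = pC n (a * b).
Proof.
rewrite tpoly_mulE pmulCl; apply/ffunP => m.
by rewrite /pscale !ffunE; case: ifP; rewrite ?mulr0.
Qed.

Lemma plinE (v : 'I_n -> R) : plin v = \sum_i (pC n (v i) : tpoly n R) * pX R i.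
Proof.
apply/ffunP => m; rewrite ffunE sum_ffunE; apply: eq_bigr => i _.
by rewrite tpoly_mulE pmulCl /pscale !ffunE.
Qed.

End TruncatedPolynomialRing.

Section PseudoExpectationFunctional.
Context {n : nat} {R : numDomainType} (L : mon n -> R).

Lemma pE_is_zmod_morphism : zmod_morphism (pE L).
Proof. by move=> p q; rewrite /pE -sumrB; apply: eq_bigr => m _; rewrite !ffunE mulrBl. Qed.

HB.instance Definition _ := GRing.isZmodMorphism.Build (mpoly n R) R (pE L) pE_is_zmod_morphism.

Lemma pE_pscale c p : pE L (pscale c p) = c * pE L p.
Proof. by rewrite /pE mulr_sumr; apply: eq_bigr => m _; rewrite ffunE mulrA. Qed.

Lemma pE_pC_mul c (p : tpoly n R) : pE L ((pC n c : tpoly n R) * p) = c * pE L p.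
Proof. by rewrite tpoly_mulE pmulCl pE_pscale. Qed.

Lemma pE_plin w : pE L (plin w) = dotv (pEx L) w.
Proof. by rewrite plinE raddf_sum; apply: eq_bigr => i _ /=; rewrite pE_pC_mul mulrC. Qed.

End PseudoExpectationFunctional.

Section DegreeBound.
Context {n : nat} {R : numDomainType}.
Implicit Types (p q : tpoly n R) (m : mon n).

Definition deg_le d p : bool := [forall m, (p m != 0) ==> (mdeg m <= d)%N].

Lemma deg_leP d p : reflect (forall m, p m != 0 -> (mdeg m <= d)%N) (deg_le d p).
Proof. by apply: (iffP forallP) => Hp m; apply/implyP; apply: Hp. Qed.

Lemma pdeg_le d p : (pdeg p <= d)%N = deg_le d p.
Proof. exact/bigmax_leqP/deg_leP. Qed.

Lemma deg_le_widen d d' p : (d <= d')%N -> deg_le d p -> deg_le d' p.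
Proof. by move=> le_dd' /deg_leP Hp; apply/deg_leP => m /Hp/leq_trans; apply. Qed.

Lemma deg_leD d p q : deg_le d p -> deg_le d q -> deg_le d (p + q).
Proof.
move=> /deg_leP Hp /deg_leP Hq; apply/deg_leP => m; rewrite ffunE.
by have [p_m0|/Hp //] := eqVneq (p m) 0; rewrite p_m0 add0r; apply: Hq.
Qed.

Lemma deg_leN d p : deg_le d p -> deg_le d (- p).
Proof. by move=> /deg_leP Hp; apply/deg_leP => m; rewrite ffunE oppr_eq0; apply: Hp. Qed.

Lemma deg_leB d p q : deg_le d p -> deg_le d q -> deg_le d (p - q).
Proof. by move=> Hp /deg_leN; apply: deg_leD. Qed.

Lemma deg_le_sum d (I : finType) (F : I -> tpoly n R) :
  (forall i, deg_le d (F i)) -> deg_le d (\sum_i F i).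
Proof.
move=> HF; elim/big_rec: _ => [|i p _ Hp]; last exact: deg_leD.
by apply/deg_leP => m; rewrite ffunE eqxx.
Qed.

Lemma deg_leM d1 d2 p q : deg_le d1 p -> deg_le d2 q -> deg_le (d1 + d2) (p * q).
Proof.
move=> /deg_leP Hp /deg_leP Hq; apply/deg_leP => m; apply: contraR => Hm.
rewrite tpoly_mulE pmulE; apply/eqP/big1 => m1 _; apply: big1 => m2 /mdeg_madd mE.
have [->|/Hp le1] := eqVneq (p m1) 0; first by rewrite mul0r.
have [->|/Hq le2] := eqVneq (q m2) 0; first by rewrite mulr0.
by move: Hm; rewrite mE leq_add.
Qed.

Lemma deg_le_pC d c : deg_le d (pC n c).
Proof.
by apply/deg_leP => m; rewrite ffunE; case: ifP => [/eqP-> _|_]; rewrite ?mdeg_mon0 ?eqxx.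
Qed.

Lemma deg_le_pX i : deg_le 1 (pX R i).
Proof.
by apply/deg_leP => m; rewrite ffunE; case: ifP => [/eqP-> _|_]; rewrite ?mdeg_mon_var ?eqxx.
Qed.

Lemma deg_le_plin w : deg_le 1 (plin w).
Proof.
by rewrite plinE; apply: deg_le_sum => i; exact: (deg_leM (deg_le_pC 0 _) (deg_le_pX i)).
Qed.

Lemma deg_le_psqnorm : deg_le 2 (psqnorm n R).
Proof.
by rewrite psqnormE; apply: deg_le_sum => i; exact: (deg_leM (deg_le_pX i) (deg_le_pX i)).
Qed.

End DegreeBound.

Section PointMass.
Context {n : nat} {R : numDomainType} (v : 'I_n -> R).
Implicit Types (p q : tpoly n R) (m : mon n).

Definition point_moment m : R := \prod_i v i ^+ m i.
Definition peval p : R := \sum_m p m * point_moment m.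

Lemma peval_is_zmod_morphism : zmod_morphism peval.
Proof. by move=> p q; rewrite /peval -sumrB; apply: eq_bigr => m _; rewrite !ffunE mulrBl. Qed.

HB.instance Definition _ := GRing.isZmodMorphism.Build (tpoly n R) R peval peval_is_zmod_morphism.

Lemma point_moment_madd m1 m2 :
  mfits m1 m2 -> point_moment (madd m1 m2) = point_moment m1 * point_moment m2.
Proof.
move=> /forallP fit; rewrite /point_moment -big_split; apply: eq_bigr => i _.
by rewrite ffunE /= inordK ?fit // exprD.
Qed.

Lemma pevalC c : peval (pC n c) = c.
Proof.
rewrite /peval (bigD1 (mon0 n)) //= big1 ?addr0 => [|m /negbTE m_neq0];
  last by rewrite ffunE m_neq0 mul0r.
by rewrite ffunE eqxx /point_moment big1 ?mulr1 // => i _; rewrite ffunE expr0.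
Qed.

Lemma pevalX i : peval (pX R i) = v i.
Proof.
rewrite /peval (bigD1 (mon_var i)) //= big1 ?addr0 => [|m /negbTE m_neq0];
  last by rewrite ffunE m_neq0 mul0r.
rewrite ffunE eqxx mul1r /point_moment (bigD1 i) //= big1 ?mulr1 => [|j /negbTE j_neq_i].
  by rewrite ffunE eqxx inordK.
by rewrite ffunE j_neq_i expr0.
Qed.

Lemma pevalM d1 d2 p q : deg_le d1 p -> deg_le d2 q -> (d1 + d2 <= 4)%N ->
  peval (p * q) = peval p * peval q.
Proof.
move=> /deg_leP Hp /deg_leP Hq Hd; rewrite /peval tpoly_mulE.
transitivity (\sum_m \sum_m1 \sum_(m2 | is_madd m1 m2 m) p m1 * q m2 * point_moment m).
  by apply: eq_bigr => m _; rewrite pmulE mulr_suml; apply: eq_bigr => m1 _; rewrite mulr_suml.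
rewrite exchange_big big_distrlr; apply: eq_bigr => m1 _ /=.
rewrite (exchange_big_dep xpredT) //; apply: eq_bigr => m2 _ /=.
rewrite -mulr_sumr sum_is_madd.
have [->|/Hp le1] := eqVneq (p m1) 0; first by rewrite !mul0r.
have [->|/Hq le2] := eqVneq (q m2) 0; first by rewrite !(mulr0, mul0r).
have fit : mfits m1 m2 by apply/mfits_mdeg/(leq_trans (leq_add le1 le2) Hd).
by rewrite fit point_moment_madd // mulrACA.
Qed.

Lemma pE_point_moment p : deg_le 4 p -> pE point_moment p = peval p.
Proof.
move=> /deg_leP Hp; rewrite /peval (bigID (fun m => mdeg m <= 4)%N) /= [X in _ + X]big1 ?addr0 //.
move=> m m_big; have [->|/Hp m_small] := eqVneq (p m) 0; first by rewrite mul0r.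
by rewrite m_small in m_big.
Qed.

End PointMass.

Section PointPseudoExpectation.
Context {n : nat} {R : realDomainType} (v : 'I_n -> R).

Lemma peval_psqnorm : peval v (psqnorm n R) = dotv v v.
Proof.
rewrite psqnormE raddf_sum; apply: eq_bigr => i _ /=.
by rewrite (pevalM _ (deg_le_pX i) (deg_le_pX i)) // pevalX.
Qed.

Lemma peval_plin w : peval v (plin w) = dotv w v.
Proof.
rewrite plinE raddf_sum; apply: eq_bigr => i _ /=.
by rewrite (pevalM _ (deg_le_pC 0 _) (deg_le_pX i)) // pevalC pevalX.
Qed.

Lemma point_is_pE4 : is_pE4 (point_moment v).
Proof.
split; first by rewrite pE_point_moment ?pevalC //; apply: deg_le_pC.
move=> p; rewrite pdeg_le => p_le2; have pp_le4 := deg_leM p_le2 p_le2.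
by rewrite pE_point_moment // (pevalM _ p_le2 p_le2) // -expr2 sqr_ge0.
Qed.

Lemma point_satisfies_sphere :
  dotv v v = 1 -> satisfies4 (point_moment v) (psqnorm n R - pC n 1).
Proof.
move=> v_unit q deg_sum; set p := psqnorm n R - pC n 1.
have [p_le q_le] : deg_le (pdeg p) p /\ deg_le (pdeg q) q by rewrite -!pdeg_le.
rewrite pE_point_moment; last exact: (deg_le_widen deg_sum (deg_leM p_le q_le)).
by rewrite (pevalM _ p_le q_le) // raddfB /= peval_psqnorm pevalC v_unit subrr mul0r.
Qed.

End PointPseudoExpectation.

Section SphereConstrained.
Context {n : nat} {R : rcfType} (L : mon n -> R).
Hypotheses (L_pE : is_pE4 L) (L_sphere : satisfies4 L (psqnorm n R - pC n 1)).
Local Notation E := (pE L).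
Local Notation sqnorm := (psqnorm n R : tpoly n R).

Lemma pE_one : E (1 : tpoly n R) = 1.
Proof. exact: L_pE.1. Qed.

Lemma pE_sqr_ge0 (p : tpoly n R) : deg_le 2 p -> 0 <= E (p * p).
Proof. by rewrite -pdeg_le; apply: L_pE.2. Qed.

Lemma pE_sphere_mul (q : tpoly n R) : deg_le 2 q -> E ((sqnorm - 1) * q) = 0.
Proof.
move=> q_le2; apply: L_sphere; apply: (@leq_add _ _ 2 2); rewrite pdeg_le //.
by apply: deg_leB; [apply: deg_le_psqnorm | apply: deg_le_pC].
Qed.

Lemma pE_sqnorm : E sqnorm = 1.
Proof.
have := pE_sphere_mul (deg_le_pC 2 1); rewrite mulr1 raddfB /= pE_one.
by move/eqP; rewrite subr_eq0 => /eqP.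
Qed.

Lemma pE_sqnorm_sqr : E (sqnorm * sqnorm) = 1.
Proof.
have := pE_sphere_mul deg_le_psqnorm; rewrite mulrBl mul1r raddfB /= pE_sqnorm.
by move/eqP; rewrite subr_eq0 => /eqP.
Qed.

Lemma pEx_sqr_le i : pEx L i ^+ 2 <= E ((pX R i : tpoly n R) * pX R i).
Proof.
set x : tpoly n R := pX R i; set u := pEx L i; set c : tpoly n R := pC n u.
have dev_le2 : deg_le 2 (x - c).
  by apply: deg_leB; [apply: deg_le_widen (deg_le_pX i) | apply: deg_le_pC].
have := pE_sqr_ge0 dev_le2.
have -> : (x - c) * (x - c) = x * x - (c * x) *+ 2 + c * (c * 1) by ring.
rewrite raddfD raddfB raddfMn /= !pE_pC_mul pE_one -[pE L x]/u; lra.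
Qed.

Lemma dotv_pEx_le1 : dotv (pEx L) (pEx L) <= 1.
Proof.
rewrite -pE_sqnorm psqnormE raddf_sum; apply: ler_sum => i _.
by rewrite -expr2; apply: pEx_sqr_le.
Qed.

Lemma pE_cube_le v0 (y : tpoly n R) : dotv v0 v0 = 1 -> y = plin v0 ->
  E (y * (y * y)) *+ 8 <= 1 *+ 2 + E y *+ 6.
Proof.
move=> v0_unit y_def; set w := 1 + y *+ 2.
pose x i : tpoly n R := pX R i; pose c i : tpoly n R := pC n (v0 i).
have c_unit : \sum_i c i * c i = 1.
  transitivity (pC n (dotv v0 v0) : tpoly n R); last by rewrite v0_unit.
  by rewrite /dotv raddf_sum; apply: eq_bigr => i _; apply: pCM.
have sos := cubic_sos_identity c_unit (etrans y_def (plinE v0)) (erefl w).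
have y_le1 : deg_le 1 y by rewrite y_def deg_le_plin.
have w_le1 : deg_le 1 w by rewrite /w mulr2n; apply: deg_leD; [apply: deg_le_pC | apply: deg_leD].
have dev_le1 i : deg_le 1 (x i - y * c i).
  exact: (deg_leB (deg_le_pX i) (deg_leM y_le1 (deg_le_pC 0 _))).
have sos_ge0 : 0 <= E (((1 - y) * w) * ((1 - y) * w) - (sqnorm - 1) * (w * w)
    + \sum_i ((x i - y * c i) * w) * ((x i - y * c i) * w)).
  rewrite raddfD raddfB /= pE_sphere_mul ?subr0; last exact: (deg_leM w_le1 w_le1).
  apply: addr_ge0; first exact/pE_sqr_ge0/(deg_leM (deg_leB (deg_le_pC 1 1) y_le1) w_le1).
  by rewrite raddf_sum; apply: sumr_ge0 => i _ /=; apply/pE_sqr_ge0/(deg_leM (dev_le1 i) w_le1).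
move: sos_ge0; rewrite -[sqnorm]/(\sum_i x i * x i) -sos raddfD raddfB !raddfMn /= pE_one.
lra.
Qed.

End SphereConstrained.

Section OptimalPseudoExpectation.
Context {n : nat} {R : rcfType} (v0 : 'I_n -> R) (tau eps : R) (A : mpoly n R) (L : mon n -> R).
Hypotheses (v0_unit : dotv v0 v0 = 1) (tau_gt0 : 0 < tau).
Hypothesis A_bound : forall L' : mon n -> R, is_pE4 L' ->
  `|pE L' A| <= eps * tau * Num.sqrt (Num.sqrt (pE L' (pmul (psqnorm n R) (psqnorm n R)))) ^+ 3.
Local Notation sphere := (psqnorm n R - pC n 1).
Local Notation y := (plin v0 : tpoly n R).
Hypotheses (L_pE : is_pE4 L) (L_sphere : satisfies4 L sphere).
Hypothesis L_opt : forall L' : mon n -> R, is_pE4 L' -> satisfies4 L' sphere ->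
  pE L' (pscale tau (pcube (plin v0)) + A) <= pE L (pscale tau (pcube (plin v0)) + A).

Lemma pE_A_bound L' : is_pE4 L' -> satisfies4 L' sphere -> `|pE L' A| <= eps * tau.
Proof.
move=> L'_pE L'_sphere; have := A_bound L'_pE.
by rewrite (pE_sqnorm_sqr L'_pE L'_sphere) !sqrtr1 expr1n mulr1.
Qed.

Lemma pE_objective L' :
  pE L' (pscale tau (pcube (plin v0)) + A) = tau * pE L' (y * (y * y)) + pE L' A.
Proof. by rewrite raddfD /= pE_pscale. Qed.

Lemma pE_cube_ge : 1 - eps *+ 2 <= pE L (y * (y * y)).
Proof.
have y_le1 : deg_le 1 y := deg_le_plin v0.
have yy_le2 : deg_le 2 (y * y) := deg_leM y_le1 y_le1.
have point_cube : pE (point_moment v0) (y * (y * y)) = 1.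
  rewrite pE_point_moment; last by apply: deg_le_widen (deg_leM y_le1 yy_le2).
  by rewrite (pevalM _ y_le1 yy_le2) // (pevalM _ y_le1 y_le1) // peval_plin v0_unit !mulr1.
have point_pE := point_is_pE4 v0; have point_sphere := point_satisfies_sphere v0_unit.
have := L_opt point_pE point_sphere; rewrite !pE_objective point_cube.
have := pE_A_bound point_pE point_sphere; have := pE_A_bound L_pE L_sphere.
rewrite !ler_norml => /andP[? ?] /andP[? ?] ?.
rewrite -subr_ge0 -(pmulr_rge0 _ tau_gt0); nra.
Qed.

End OptimalPseudoExpectation.


Theorem mainTheorem3 :
  exists C : nat,
  forall (R : rcfType) (n : nat) (v0 : 'I_n -> R) (tau eps : R)
         (A : mpoly n R) (L : mon n -> R),
    dotv v0 v0 = 1 ->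
    0 < tau -> 0 <= eps ->
    homog3 A ->
    (forall L' : mon n -> R, is_pE4 L' ->
       `|pE L' A| <= eps * tau * Num.sqrt (Num.sqrt (pE L' (pmul (psqnorm n R) (psqnorm n R)))) ^+ 3) ->
    let T := pscale tau (pcube (plin v0)) + A in
    let sphere := psqnorm n R - pC n 1 in
    is_pE4 L -> satisfies4 L sphere ->
    (forall L' : mon n -> R, is_pE4 L' -> satisfies4 L' sphere -> pE L' T <= pE L T) ->
    let v := fun i => pEx L i / Num.sqrt (dotv (pEx L) (pEx L)) in
    1 - C%:R * eps <= dotv v v0.
Proof.
exists 8%N => R n v0 tau eps A L v0_unit tau_gt0 eps_ge0 _ A_bound T sphere L_pE L_sphere L_opt.
have cube_ge := pE_cube_ge v0_unit tau_gt0 A_bound L_pE L_sphere L_opt.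
have cube_le := pE_cube_le L_pE L_sphere v0_unit (erefl (plin v0 : tpoly n R)).
have norm_le1 := dotv_pEx_le1 L_pE L_sphere.
have corr_sqr_le := dotv_sqr_le (pEx L) v0_unit.
rewrite pE_plin in cube_le; cbv zeta; rewrite dotv_divl.
move: (dotv (pEx L) v0) (dotv (pEx L) (pEx L)) cube_le corr_sqr_le norm_le1 => a N cube_le aN N_le1.
have [a_ge0|a_lt0] := leP 0 a.
  by apply: le_trans (ler_div_sqrt a_ge0 aN N_le1); lra.
by apply: le_trans (ger_div_sqrt aN); lra.
Qed.
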